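(* Let $G$ be a finite group with $Z(G)=1$, let $H\subseteq G$ be an abelian subgroup, let $\omega$ be a 2-cocycle on $\widehat H$, and let $A=(kG)^J$ where $J=\sum_{\alpha,\beta\in\widehat H}\omega(\alpha,\beta)e_\alpha\otimes e_\beta$. Let $\eta\in\widehat G=G(A^* )$. Then $\eta\in G(A^* )\cap Z(A^* )$ if and only if the restriction $\eta|_H\in\widehat H$ is $\omega$-regular, i.e. $\omega(\chi,\eta|_H)=\omega(\eta|_H,\chi)$ for all $\chi\in\widehat H$. If moreover $\omega$ is non-degenerate, then $\eta\in G(A^* )\cap Z(A^* )$ if and only if $\eta|_H=1$.
   Context: $k$ is an algebraically closed field of characteristic zero. A twist in a finite dimensional Hopf algebra $A$ is an invertible $J\in A\otimes A$ with $(\Delta\otimes \mathrm{id})(J)(J\otimes 1)=(\mathrm{id}\otimes\Delta)(J)(1\otimes J)$ and $(\epsilon\otimes\mathrm{id})(J)=(\mathrm{id}\otimes\epsilon)(J)=1$; $A^J$ denotes the Hopf algebra with the same algebra structure and counit as $A$, comultiplication $\Delta^J(h)=J^{-1}\Delta(h)J$, and antipode $S^J(h)=v^{-1}S(h)v$, $v=m(S\otimes\mathrm{id})(J)$. For an abelian subgroup $H$ of a finite group $G$, $\widehat H$ is its group of characters $H\to k^*$, and for $\chi\in\widehat H$, $e_\chi=\frac{1}{|H|}\sum_{h\in H}\chi(h^{-1})h\in kH\subseteq kG$. For a 2-cocycle $\omega:\widehat H\times\widehat H\to k^*$, $J=\sum_{\alpha,\beta\in\widehat H}\omega(\alpha,\beta)e_\alpha\otimes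 e_\beta$ is a twist in $kG$ (the twist lifted from $H$ associated with $\omega$). An element $\chi\in\widehat H$ is $\omega$-regular if $\omega(\chi,\psi)=\omega(\psi,\chi)$ for all $\psi\in\widehat H$; $\omega$ is non-degenerate if the trivial character is the only $\omega$-regular element. For $A=(kG)^J$, $G(A^* )$ (group-likes of the dual) equals $\widehat G$, the group of linear characters $G\to k^*$; $Z(\cdot)$ denotes the center. *)

From HB Require Import structures.
From mathcomp Require Import all_boot all_order all_algebra all_fingroup all_solvable.
Set Implicit Arguments. Unset Strict Implicit. Unset Printing Implicit Defensive.
Import GRing.Theory.
Local Open Scope ring_scope.

(* Group algebra kG of a finite group gT (the whole finGroupType), elements
   encoded by their coefficient functions: a = \sum_g a g * g. *)
Notation KG k gT := {ffun gT -> k} (only parsing).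
(* kG (x) kG, encoded by coefficients on the basis g (x) h. *)
Notation KG2 k gT := {ffun (gT * gT)%type -> k} (only parsing).

Section GroupAlgebra.
Variables (k : fieldType) (gT : finGroupType).

(* multiplication in kG (x) kG (componentwise group multiplication) *)
Definition mul2 (a b : KG2 k gT) : KG2 k gT :=
  [ffun p : gT * gT => \sum_(q : gT * gT)
      a q * b (((q.1)^-1 * p.1)%g, ((q.2)^-1 * p.2)%g)].

Definition one2 : KG2 k gT := [ffun p : gT * gT => if (p.1 == 1%g) && (p.2 == 1%g) then 1 else 0].

Definition tens (a b : KG k gT) : KG2 k gT := [ffun p : gT * gT => a p.1 * b p.2].

Definition delta (g : gT) : KG k gT := [ffun x => if x == g then 1 else 0].
Definition Delta (g : gT) : KG2 k gT := tens (delta g) (delta g).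

(* characters of a subgroup H, encoded as functions gT -> k vanishing off H *)
Definition is_char (H : {set gT}) (chi : {ffun gT -> k}) : Prop :=
  [/\ forall g, g \notin H -> chi g = 0,
      chi 1%g = 1 &
      {in H &, forall x y, chi (x * y)%g = chi x * chi y}].

Definition chi_mul (a b : {ffun gT -> k}) : {ffun gT -> k} := [ffun g => a g * b g].

Definition chi_one (H : {set gT}) : {ffun gT -> k} :=
  [ffun g => if g \in H then 1 else 0].

Definition restr (H : {set gT}) (eta : gT -> k) : {ffun gT -> k} :=
  [ffun g => if g \in H then eta g else 0].

(* linear characters of G (= group-likes of A^* ) *)
Definition is_lin_char (eta : gT -> k) : Prop :=
  eta 1%g = 1 /\ forall x y, eta (x * y)%g = eta x * eta y.

Definition e_chi (H : {set gT}) (chi : {ffun gT -> k}) : KG k gT :=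
  [ffun g => if g \in H then (#|H|%:R)^-1 * chi (g^-1)%g else 0].

(* 2-cocycle on \hat H with values in k^*, hatH an enumeration of \hat H *)
Definition two_cocycle (hatH : seq {ffun gT -> k})
    (omega : {ffun gT -> k} -> {ffun gT -> k} -> k) : Prop :=
  (forall a b, a \in hatH -> b \in hatH -> omega a b != 0) /\
  (forall a b c, a \in hatH -> b \in hatH -> c \in hatH ->
     omega a b * omega (chi_mul a b) c = omega b c * omega a (chi_mul b c)).

Definition twistJ (H : {set gT}) (hatH : seq {ffun gT -> k})
    (omega : {ffun gT -> k} -> {ffun gT -> k} -> k) : KG2 k gT :=
  [ffun p : gT * gT => \sum_(a <- hatH) \sum_(b <- hatH)
      omega a b * tens (e_chi H a) (e_chi H b) p].

Definition DeltaJ (J Jinv : KG2 k gT) (g : gT) : KG2 k gT :=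
  mul2 Jinv (mul2 (Delta g) J).

(* multiplication of A^* = (kG^J)^*, dual to Delta^J:
   (f * f')(g) = <f (x) f', Delta^J(g)> *)
Definition dual_mul (J Jinv : KG2 k gT) (f f' : gT -> k) : gT -> k :=
  fun g => \sum_(p : gT * gT) DeltaJ J Jinv g p * (f p.1 * f' p.2).

Definition central_dual (J Jinv : KG2 k gT) (eta : gT -> k) : Prop :=
  forall f : gT -> k, dual_mul J Jinv eta f =1 dual_mul J Jinv f eta.

Definition omega_regular (hatH : seq {ffun gT -> k})
    (omega : {ffun gT -> k} -> {ffun gT -> k} -> k) (chi : {ffun gT -> k}) : Prop :=
  forall psi, psi \in hatH -> omega chi psi = omega psi chi.

Definition omega_nondegenerate (H : {set gT}) (hatH : seq {ffun gT -> k})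
    (omega : {ffun gT -> k} -> {ffun gT -> k} -> k) : Prop :=
  forall chi, chi \in hatH -> omega_regular hatH omega chi -> chi = chi_one H.

End GroupAlgebra.

From HB Require Import structures.
From mathcomp Require Import all_boot all_order all_algebra all_fingroup all_solvable.
From mathcomp Require Import all_field all_character.
From mathcomp Require Import ring.
Set Implicit Arguments. Unset Strict Implicit. Unset Printing Implicit Defensive.
Import GRing.Theory Num.Theory.
Local Open Scope ring_scope.

(* Pairing one tensor factor of Delta^J(g) = J^-1 (g (x) g) J with the linear
   character eta is an algebra map kG (x) kG -> kG, so eta is central in A^*
   iff u^-1 g u = v^-1 g v for all g in G, where
     u = (eta (x) id)(J) = \sum_chi omega(eta|_H, chi) e_chi  and
     v = (id (x) eta)(J) = \sum_chi omega(chi, eta|_H) e_chi.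
   If eta|_H is omega-regular then u = v.  Conversely, u v^-1 is then central
   in kG and equals \sum_chi lam(chi) e_chi, where lam(chi) =
   omega(eta|_H, chi) / omega(chi, eta|_H) is a character of the dual group
   by the cocycle identity.  By duality for the abelian group H such an
   element is a group element h of H; it is central in G, hence h = 1 and
   lam is trivial. *)

Lemma closed_prim_root_exists (k : closedFieldType) n :
  [pchar k] =i pred0 -> (0 < n)%N -> exists z : k, n.-primitive_root z.
Proof.
move=> ch0 n_gt0; pose p : {poly k} := 'X^n - 1.
have [r Dp] := closed_field_poly_normal p.
rewrite (monicP _) ?monicXnsubC // scale1r in Dp.
have r_unity: all n.-unity_root r by apply/allP=> z; rewrite -root_prod_XsubC -Dp.
have size_r: (n < (size r).+1)%N by rewrite -(size_prod_XsubC r id) -Dp size_XnsubC.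
have [|z] := hasP (has_prim_root n_gt0 r_unity _ size_r); last by exists z.
rewrite -separable_prod_XsubC -Dp separable_Xn_sub_1 //.
by move/pcharf0P: ch0 => ->; rewrite -lt0n.
Qed.

(* The complex characters of the abelian group H separate its points; they
   are transported to k by matching primitive |H|-th roots of unity. *)
Lemma abelian_char_separates (k : closedFieldType) (gT : finGroupType)
    (H : {group gT}) z :
  [pchar k] =i pred0 -> abelian H -> z \in H -> z != 1%g ->
  exists2 gam : {ffun gT -> k}, is_char H gam & gam z != 1.
Proof.
move=> ch0 cHH Hz nt_z; have n_gt0 := cardG_gt0 H; set n := #|H| in n_gt0.
have [zk prim_zk] := closed_prim_root_exists ch0 n_gt0.
have [zC prim_zC] := C_prim_root_exists n_gt0.
have [i chi_z] : exists i : Iirr H, 'chi_i z != 1.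
  apply/existsP; apply: contraT; rewrite negb_exists => /forallP chi_z1.
  have := cfRegE H z; rewrite (negbTE nt_z) mulr0n cfReg_sum sum_cfunE.
  under eq_bigr => j _ do
    rewrite cfunE (lin_char1 (char_abelianP _ cHH j)) mul1r (eqP (negbNE (chi_z1 j))).
  by rewrite sumr_const card_Iirr_abelian // => /eqP; rewrite pnatr_eq0 eqn0Ngt cardG_gt0.
have lin_xi := char_abelianP _ cHH i; set xi := 'chi_i in chi_z lin_xi.
pose ex h := odflt (Ordinal n_gt0) [pick j : 'I_n | xi h == zC ^+ j].
have xiE h : h \in H -> xi h = zC ^+ ex h.
  move=> Hh; rewrite /ex; case: pickP => [j /eqP //|/= no_j].
  have xi_n : xi h ^+ n = 1 by rewrite -lin_charX // expg_cardG // lin_char1.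
  by have [j Ej] := prim_rootP prim_zC xi_n; have := no_j j; rewrite Ej eqxx.
have transfer a b : (zk ^+ a == zk ^+ b) = (zC ^+ a == zC ^+ b).
  by rewrite (eq_prim_root_expr prim_zk) (eq_prim_root_expr prim_zC).
exists [ffun h => if h \in H then zk ^+ ex h else 0].
  split=> [g /negbTE notHg | | x y Hx Hy]; rewrite !ffunE ?notHg ?group1 //.
    by rewrite -(expr0 zk); apply/eqP; rewrite transfer -xiE // expr0 lin_char1.
  rewrite groupM // Hx Hy -exprD; apply/eqP; rewrite transfer exprD -!xiE ?groupM //.
  by rewrite lin_charM.
rewrite ffunE Hz -(expr0 zk) transfer -xiE // expr0.
Qed.

Section Convolution.
Variables (k : fieldType) (gT : finGroupType).
Implicit Types (a b c : {ffun gT -> k}) (g h : gT).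

Definition conv a b : {ffun gT -> k} := [ffun y => \sum_z a z * b (z^-1 * y)%g].

Lemma conv_deltal g a : conv (delta k g) a = [ffun y => a (g^-1 * y)%g].
Proof.
apply/ffunP=> y; rewrite !ffunE (bigD1 g) //= ffunE eqxx mul1r big1 ?addr0 //.
by move=> z /negbTE z_g; rewrite ffunE z_g mul0r.
Qed.

Lemma conv_deltar a g : conv a (delta k g) = [ffun y => a (y * g^-1)%g].
Proof.
apply/ffunP=> y; rewrite !ffunE (bigD1 (y * g^-1)%g) //= ffunE.
rewrite invMg invgK mulgKV eqxx mulr1 big1 ?addr0 // => z z_yg; rewrite ffunE.
have [Ez|] := eqP; last by rewrite mulr0.
by case/eqP: z_yg; rewrite -Ez invMg invgK mulKVg.
Qed.

Lemma conv1l a : conv (delta k 1) a = a.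
Proof. by apply/ffunP=> y; rewrite conv_deltal ffunE invg1 mul1g. Qed.

Lemma conv1r a : conv a (delta k 1) = a.
Proof. by apply/ffunP=> y; rewrite conv_deltar ffunE invg1 mulg1. Qed.

Lemma conv0l a : conv 0 a = 0.
Proof. by apply/ffunP=> y; rewrite !ffunE big1 // => z _; rewrite ffunE mul0r. Qed.

Lemma convA a b c : conv (conv a b) c = conv a (conv b c).
Proof.
apply/ffunP=> y; rewrite !ffunE.
under eq_bigr => z _ do rewrite ffunE mulr_suml.
rewrite exchange_big /=; apply: eq_bigr => x _.
rewrite ffunE mulr_sumr (reindex_inj (mulgI x)) /=.
by apply: eq_bigr => z _; rewrite mulKg invMg mulgA mulrA.
Qed.

Lemma conv_delta g h : conv (delta k g) (delta k h) = delta k (g * h).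
Proof.
by apply/ffunP=> y; rewrite conv_deltal !ffunE -(inj_eq (mulgI g)) mulKVg.
Qed.

Lemma delta_inj : injective (@delta k gT).
Proof.
move=> g h /ffunP/(_ g); rewrite !ffunE eqxx.
by case: eqP => // _ /eqP; rewrite oner_eq0.
Qed.

Lemma delta_neq0 g : delta k g != 0.
Proof. by apply/eqP=> /ffunP/(_ g)/eqP; rewrite !ffunE eqxx oner_eq0. Qed.

Lemma sum_mul_delta (F : gT -> k) y : \sum_x F x * delta k y x = F y.
Proof.
rewrite (bigD1 y) //= ffunE eqxx mulr1 big1 ?addr0 // => x /negbTE x_y.
by rewrite ffunE x_y mulr0.
Qed.

Lemma conv_scalel (s : k) a b :
  conv [ffun y => s * a y] b = [ffun y => s * conv a b y].
Proof.
apply/ffunP=> y; rewrite !ffunE mulr_sumr.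
by apply: eq_bigr => z _; rewrite ffunE mulrA.
Qed.

Lemma conv_scaler (s : k) a b :
  conv a [ffun y => s * b y] = [ffun y => s * conv a b y].
Proof.
apply/ffunP=> y; rewrite !ffunE mulr_sumr.
by apply: eq_bigr => z _; rewrite ffunE mulrCA.
Qed.

Lemma conv_suml (I : Type) (r : seq I) (F : I -> {ffun gT -> k}) b :
  conv (\sum_(i <- r) F i) b = \sum_(i <- r) conv (F i) b.
Proof.
apply/ffunP=> y; rewrite ffunE sum_ffunE.
under eq_bigr => z _ do rewrite sum_ffunE mulr_suml.
by rewrite exchange_big; apply: eq_bigr => i _; rewrite ffunE.
Qed.

Lemma conv_sumr (I : Type) (r : seq I) (F : I -> {ffun gT -> k}) a :
  conv a (\sum_(i <- r) F i) = \sum_(i <- r) conv a (F i).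
Proof.
apply/ffunP=> y; rewrite ffunE sum_ffunE.
under eq_bigr => z _ do rewrite sum_ffunE mulr_sumr.
by rewrite exchange_big; apply: eq_bigr => i _; rewrite ffunE.
Qed.

Lemma orthogonal_idem_delta (w : {ffun gT -> k}) :
  (forall x y, w x * w y = if x == y then w x else 0) -> w != 0 ->
  exists h, w = delta k h.
Proof.
move=> w_idem w_neq0; have [h wh_neq0] : exists h, w h != 0.
  apply/existsP; apply: contraNT w_neq0; rewrite negb_exists => /forallP w0.
  by apply/eqP/ffunP=> x; rewrite ffunE; apply/eqP/negPn/w0.
have wh1 : w h = 1 by apply: (mulfI wh_neq0); rewrite w_idem eqxx mulr1.
exists h; apply/ffunP=> y; rewrite ffunE; have [->//|/eqP y_neq_h] := eqP.
by have := w_idem h y; rewrite wh1 mul1r eq_sym (negbTE y_neq_h).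
Qed.

Lemma conv_conj_commute u u' v v' :
  conv u u' = delta k 1 -> conv v v' = delta k 1 ->
  (forall g, conv u' (conv (delta k g) u) = conv v' (conv (delta k g) v)) ->
  forall g, conv (delta k g) (conv u v') = conv (conv u v') (delta k g).
Proof.
move=> uu' vv' conj_eq g.
transitivity (conv u (conv (conv u' (conv (delta k g) u)) v')).
  by rewrite !convA -(convA u u') uu' conv1l.
by rewrite conj_eq !convA vv' conv1r.
Qed.

End Convolution.

Section Contraction.
Variables (k : fieldType) (gT : finGroupType) (eta : gT -> k).
Implicit Types a b : KG2 k gT.

(* [contr1] is [eta (x) id] and [contr2] is [id (x) eta]; they are algebra
   maps kG (x) kG -> kG when [eta] is a linear character. *)
Definition contr1 a : {ffun gT -> k} := [ffun y => \sum_x a (x, y) * eta x].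
Definition contr2 a : {ffun gT -> k} := [ffun x => \sum_y a (x, y) * eta y].

Lemma sum_pair (F : gT * gT -> k) : \sum_p F p = \sum_x \sum_y F (x, y).
Proof. by rewrite pair_bigA; apply: eq_bigr => -[]. Qed.

Lemma dual_mul_contr1 J Jinv (f : gT -> k) g :
  dual_mul J Jinv eta f g = \sum_y contr1 (DeltaJ J Jinv g) y * f y.
Proof.
rewrite /dual_mul sum_pair exchange_big; apply: eq_bigr => y _.
by rewrite ffunE mulr_suml; apply: eq_bigr => x _; rewrite mulrA.
Qed.

Lemma dual_mul_contr2 J Jinv (f : gT -> k) g :
  dual_mul J Jinv f eta g = \sum_x contr2 (DeltaJ J Jinv g) x * f x.
Proof.
rewrite /dual_mul sum_pair; apply: eq_bigr => x _.
by rewrite ffunE mulr_suml; apply: eq_bigr => y _; rewrite /=; ring.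
Qed.

Lemma central_dualP J Jinv : central_dual J Jinv eta <->
  forall g, contr1 (DeltaJ J Jinv g) = contr2 (DeltaJ J Jinv g).
Proof.
split=> [central g | E f g]; last by rewrite dual_mul_contr1 dual_mul_contr2 E.
apply/ffunP=> y; have := central (delta k y) g.
by rewrite dual_mul_contr1 dual_mul_contr2 !sum_mul_delta.
Qed.

Lemma contr1_Delta g : contr1 (Delta k g) = [ffun y => eta g * delta k g y].
Proof.
apply/ffunP=> y; rewrite !ffunE (bigD1 g) //= big1 => [|x /negbTE x_g].
  by rewrite !ffunE eqxx mul1r addr0 mulrC.
by rewrite !ffunE x_g !mul0r.
Qed.

Lemma contr2_Delta g : contr2 (Delta k g) = [ffun y => eta g * delta k g y].
Proof.
apply/ffunP=> x; rewrite !ffunE (bigD1 g) //= big1 => [|y /negbTE y_g].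
  by rewrite !ffunE eqxx mulr1 addr0 mulrC.
by rewrite !ffunE y_g mulr0 mul0r.
Qed.

Hypothesis lin_eta : is_lin_char eta.

Lemma contr1_mul a b : contr1 (mul2 a b) = conv (contr1 a) (contr1 b).
Proof.
have [_ etaM] := lin_eta; apply/ffunP=> y; rewrite !ffunE.
under eq_bigr => x _ do rewrite ffunE sum_pair mulr_suml.
rewrite exchange_big /=.
under eq_bigr => q1 _ do under eq_bigr => q2 _ do rewrite mulr_suml.
under eq_bigr => q1 _ do rewrite exchange_big /=.
rewrite exchange_big /=; apply: eq_bigr => z _; rewrite !ffunE mulr_suml.
apply: eq_bigr => x1 _; rewrite mulr_sumr (reindex_inj (mulgI x1)) /=.
by apply: eq_bigr => x2 _; rewrite mulKg etaM /=; ring.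
Qed.

Lemma contr2_mul a b : contr2 (mul2 a b) = conv (contr2 a) (contr2 b).
Proof.
have [_ etaM] := lin_eta; apply/ffunP=> x; rewrite !ffunE.
under eq_bigr => y _ do rewrite ffunE sum_pair mulr_suml.
under eq_bigr => q1 _ do under eq_bigr => q2 _ do rewrite mulr_suml.
rewrite exchange_big /=; apply: eq_bigr => z _; rewrite !ffunE mulr_suml.
rewrite exchange_big /=; apply: eq_bigr => y1 _.
rewrite mulr_sumr (reindex_inj (mulgI y1)) /=.
by apply: eq_bigr => y2 _; rewrite mulKg etaM /=; ring.
Qed.

Lemma contr1_one : contr1 (one2 k gT) = delta k 1.
Proof.
have [eta1 _] := lin_eta; apply/ffunP=> y; rewrite !ffunE (bigD1 1%g) //= big1.
  by rewrite ffunE /= eqxx /=; case: (y == 1%g); rewrite ?eta1 ?mul1r ?mul0r addr0.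
by move=> x /negbTE x1; rewrite ffunE /= x1 mul0r.
Qed.

Lemma contr2_one : contr2 (one2 k gT) = delta k 1.
Proof.
have [eta1 _] := lin_eta; apply/ffunP=> x; rewrite !ffunE (bigD1 1%g) //= big1.
  by rewrite ffunE /= eqxx andbT; case: (x == 1%g); rewrite ?eta1 ?mul1r ?mul0r addr0.
by move=> y /negbTE y1; rewrite ffunE /= y1 andbF mul0r.
Qed.

Lemma contr1_DeltaJ J Jinv g : contr1 (DeltaJ J Jinv g) =
  conv (contr1 Jinv) (conv [ffun y => eta g * delta k g y] (contr1 J)).
Proof. by rewrite /DeltaJ !contr1_mul contr1_Delta. Qed.

Lemma contr2_DeltaJ J Jinv g : contr2 (DeltaJ J Jinv g) =
  conv (contr2 Jinv) (conv [ffun y => eta g * delta k g y] (contr2 J)).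
Proof. by rewrite /DeltaJ !contr2_mul contr2_Delta. Qed.

Lemma lin_char_neq0 g : eta g != 0.
Proof.
have [eta1 etaM] := lin_eta; apply/eqP=> eta_g0; move/eqP: eta1.
by rewrite -(mulgV g) etaM eta_g0 mul0r eq_sym oner_eq0.
Qed.

End Contraction.

Section Characters.
Variables (k : fieldType) (gT : finGroupType) (H : {group gT}).
Hypothesis ch0 : [pchar k] =i pred0.
Implicit Types a b : {ffun gT -> k}.
Local Notation e := (e_chi H).

Definition chi_inv b : {ffun gT -> k} := [ffun g => b (g^-1)%g].

Lemma natr_cardG_neq0 : (#|H|%:R : k) != 0.
Proof. by move/pcharf0P: ch0 => ->; rewrite -lt0n cardG_gt0. Qed.

Lemma char_out b g : is_char H b -> g \notin H -> b g = 0.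
Proof. by case=> + _ _; apply. Qed.

Lemma char_invK b h : is_char H b -> h \in H -> b (h^-1)%g * b h = 1.
Proof. by case=> _ b1 bM Hh; rewrite -bM ?groupV // mulVg b1. Qed.

Lemma char_neq0 b h : is_char H b -> h \in H -> b h != 0.
Proof.
move=> b_char Hh; apply/eqP=> bh0; move/eqP: (char_invK b_char Hh).
by rewrite bh0 mulr0 eq_sym oner_eq0.
Qed.

Lemma is_char_one : is_char H (chi_one k H).
Proof.
split=> [g /negbTE notHg | | x y Hx Hy]; rewrite !ffunE ?notHg ?group1 //.
by rewrite groupM // Hx Hy mulr1.
Qed.

Lemma is_char_mul a b : is_char H a -> is_char H b -> is_char H (chi_mul a b).
Proof.
move=> [a0 a1 aM] [b0 b1 bM]; split=> [g notHg | | x y Hx Hy]; rewrite !ffunE.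
- by rewrite a0 ?mul0r.
- by rewrite a1 b1 mulr1.
- by rewrite aM ?bM //; ring.
Qed.

Lemma is_char_inv a : is_char H a -> is_char H (chi_inv a).
Proof.
move=> [a0 a1 aM]; split=> [g notHg | | x y Hx Hy]; rewrite !ffunE.
- by rewrite a0 ?groupV.
- by rewrite invg1.
- by rewrite invMg aM ?groupV // mulrC.
Qed.

Lemma is_char_restr (eta : gT -> k) : is_lin_char eta -> is_char H (restr H eta).
Proof.
case=> eta1 etaM; split=> [g /negbTE notHg | | x y Hx Hy]; rewrite !ffunE ?notHg //.
  by rewrite group1.
by rewrite groupM // Hx Hy etaM.
Qed.

Lemma chi_mulC a b : chi_mul a b = chi_mul b a.
Proof. by apply/ffunP=> x; rewrite !ffunE mulrC. Qed.

Lemma chi_mul1 a : is_char H a -> chi_mul (chi_one k H) a = a.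
Proof.
move=> a_char; apply/ffunP=> x; rewrite !ffunE.
by case: ifP => [_|/negbT notHx]; rewrite ?mul1r // (char_out a_char notHx) mul0r.
Qed.

Lemma chi_mulVK a b : is_char H a -> is_char H b ->
  chi_mul (chi_mul a (chi_inv b)) b = a.
Proof.
move=> a_char b_char; apply/ffunP=> g; rewrite !ffunE.
have [Hg|notHg] := boolP (g \in H); last by rewrite (char_out a_char notHg) !mul0r.
by rewrite -mulrA char_invK // mulr1.
Qed.

Lemma char_orthogonality a b : is_char H a -> is_char H b ->
  \sum_x a (x^-1)%g * b x = if a == b then #|H|%:R else 0.
Proof.
move=> a_char b_char; have [<-|a_neq_b] := eqP.
  transitivity (\sum_(x in H) (1 : k)); last by rewrite sumr_const.
  rewrite [RHS]big_mkcond; apply: eq_bigr => x _.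
  by case: ifPn => [/(char_invK a_char)|/(char_out a_char) ->]; rewrite ?mulr0.
have /existsP[g abg] : [exists g, a g != b g].
  apply: contraT; rewrite negb_exists => /forallP ab_eq; case: a_neq_b.
  by apply/ffunP => g; apply/eqP/negPn/ab_eq.
have Hg : g \in H.
  apply: contraR abg => notHg.
  by rewrite (char_out a_char notHg) (char_out b_char notHg).
set S := \sum_x _.
have S_fix : S = a (g^-1)%g * b g * S.
  rewrite {1}/S (reindex_inj (mulgI g)) /= /S mulr_sumr; apply: eq_bigr => x _.
  have [Hx|notHx] := boolP (x \in H).
    case: a_char b_char => _ _ aM [_ _ bM].
    by rewrite invMg (aM _ _ (groupVr Hx) (groupVr Hg)) (bM _ _ Hg Hx); ring.
  have notHgx : (g * x)%g \notin H by rewrite groupMl.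
  by rewrite (char_out b_char notHgx) (char_out b_char notHx) !mulr0.
have ab_neq1 : a (g^-1)%g * b g != 1.
  apply: contra abg => /eqP ab1; apply/eqP.
  by rewrite -[a g]mulr1 -ab1 mulrA (mulrC (a g)) char_invK // mul1r.
apply/eqP; move/eqP: S_fix; rewrite -subr_eq0 -{1}[S]mul1r -mulrBl mulf_eq0.
by rewrite subr_eq0 eq_sym (negbTE ab_neq1).
Qed.

Lemma e_chi_out b y : y \notin H -> e b y = 0.
Proof. by rewrite ffunE => /negbTE ->. Qed.

Lemma e_chi1 b : is_char H b -> e b 1%g = #|H|%:R^-1.
Proof. by case=> _ b1 _; rewrite ffunE group1 invg1 b1 mulr1. Qed.

Lemma e_chi_lin_char a (eta : gT -> k) : is_char H a -> is_lin_char eta ->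
  \sum_x e a x * eta x = if a == restr H eta then 1 else 0.
Proof.
move=> a_char lin_eta; transitivity
    (#|H|%:R^-1 * \sum_x a (x^-1)%g * restr H eta x).
  rewrite mulr_sumr; apply: eq_bigr => x _; rewrite !ffunE.
  by case: ifP => _; rewrite ?mul0r ?mulr0 // mulrA.
rewrite (char_orthogonality a_char (is_char_restr lin_eta)).
by case: ifP => _; rewrite ?mulr0 // mulVf // natr_cardG_neq0.
Qed.

Lemma conv_e_chi a b : is_char H a -> is_char H b ->
  conv (e a) (e b) = if a == b then e a else 0.
Proof.
move=> a_char b_char; apply/ffunP=> y.
rewrite ffunE [RHS](fun_if (fun f : {ffun gT -> k} => f y)).
rewrite [(0 : {ffun gT -> k}) y]ffunE.
have [Hy|notHy] := boolP (y \in H); last first.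
  rewrite e_chi_out // if_same big1 // => z _.
  have [Hz|notHz] := boolP (z \in H); last by rewrite e_chi_out ?mul0r.
  by rewrite (e_chi_out b) ?mulr0 // groupMl ?groupV.
transitivity (#|H|%:R^-1 * #|H|%:R^-1 * b (y^-1)%g * \sum_z a (z^-1)%g * b z).
  rewrite mulr_sumr; apply: eq_bigr => z _; rewrite !ffunE.
  have [Hz|notHz] := boolP (z \in H); last first.
    by rewrite (char_out b_char notHz) !mul0r !mulr0.
  rewrite groupMl ?groupV // Hy invMg invgK.
  by case: b_char => _ _ bM; rewrite bM ?groupV //; ring.
rewrite char_orthogonality //; have [<-|_] := eqP; last by rewrite mulr0.
rewrite ffunE Hy; field; exact: natr_cardG_neq0.
Qed.

Variable hatH : seq {ffun gT -> k}.
Hypothesis hatHP : forall chi, chi \in hatH <-> is_char H chi.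
Hypothesis hatH_uniq : uniq hatH.

Lemma perm_chi_mulr c :
  c \in hatH -> perm_eq hatH (map (fun b => chi_mul b c) hatH).
Proof.
move=> /hatHP c_char.
have mul_inj : {in hatH &, injective (fun b => chi_mul b c)}.
  move=> a b /hatHP a_char /hatHP b_char /ffunP abc_eq; apply/ffunP => x.
  have := abc_eq x; rewrite !ffunE; have [Hx|notHx] := boolP (x \in H).
    by move/mulIf; apply; rewrite char_neq0.
  by rewrite (char_out a_char notHx) (char_out b_char notHx).
have mul_uniq : uniq (map (fun b => chi_mul b c) hatH) by rewrite map_inj_in_uniq.
have mul_sub : {subset map (fun b => chi_mul b c) hatH <= hatH}.
  by move=> x /mapP[a /hatHP a_char ->]; apply/hatHP/is_char_mul.
have [_ E] := uniq_min_size mul_uniq mul_sub (eq_leq (esym (size_map _ _))).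
by apply: uniq_perm => // x; rewrite E.
Qed.

Lemma sum_chi_mulr (F : {ffun gT -> k} -> k) c : c \in hatH ->
  \sum_(b <- hatH) F b = \sum_(b <- hatH) F (chi_mul b c).
Proof. by move=> hc; rewrite (perm_big _ (perm_chi_mulr hc)) big_map. Qed.

Lemma chi_one_in : chi_one k H \in hatH.
Proof. exact/hatHP/is_char_one. Qed.

Definition ecomb (lam : {ffun gT -> k} -> k) : {ffun gT -> k} :=
  \sum_(b <- hatH) [ffun y => lam b * e b y].

Lemma ecombE lam y : ecomb lam y = \sum_(b <- hatH) lam b * e b y.
Proof. by rewrite sum_ffunE; apply: eq_bigr => b _; rewrite ffunE. Qed.

Lemma conv_ecomb_e lam c : c \in hatH ->
  conv (ecomb lam) (e c) = [ffun y => lam c * e c y].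
Proof.
move=> hc; have c_char := proj1 (hatHP c) hc.
rewrite conv_suml (bigD1_seq c) //= conv_scalel conv_e_chi // eqxx.
rewrite big1_seq ?addr0 // => b /andP[b_neq_c /hatHP b_char].
rewrite conv_scalel conv_e_chi // (negbTE b_neq_c).
by apply/ffunP=> y; rewrite !ffunE mulr0.
Qed.

End Characters.

Section AbelianDuality.
Variables (k : closedFieldType) (gT : finGroupType) (H : {group gT}).
Variable hatH : seq {ffun gT -> k}.
Hypothesis ch0 : [pchar k] =i pred0.
Hypothesis cHH : abelian H.
Hypothesis hatHP : forall chi, chi \in hatH <-> is_char H chi.
Hypothesis hatH_uniq : uniq hatH.
Local Notation e := (e_chi H).
Local Notation ecomb := (ecomb H hatH).

Lemma sum_chars_nt z : z \in H -> z != 1%g -> \sum_(b <- hatH) b z = 0.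
Proof.
move=> Hz nt_z; have [c c_char cz_neq1] := abelian_char_separates ch0 cHH Hz nt_z.
have hc : c \in hatH by apply/hatHP.
set S := \sum_(b <- _) _.
have S_fix : S = c z * S.
  rewrite {1}/S (sum_chi_mulr hatHP hatH_uniq (fun b => b z) hc) /S mulr_sumr.
  by apply: eq_bigr => b _; rewrite ffunE mulrC.
apply/eqP; move/eqP: S_fix; rewrite -subr_eq0 -{1}[S]mul1r -mulrBl mulf_eq0.
by rewrite subr_eq0 eq_sym (negbTE cz_neq1).
Qed.

(* Evaluate [\sum_b \sum_x 1(x^-1) b(x)] by orthogonality, and by exchanging
   the sums. *)
Lemma sum_chars1 : \sum_(b <- hatH) b 1%g = #|H|%:R.
Proof.
have one_char := is_char_one k H.
transitivity (\sum_(b <- hatH) \sum_x chi_one k H (x^-1)%g * b x).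
  rewrite exchange_big (bigD1 1%g) //= invg1 ffunE group1 [X in _ + X]big1 => [|x nt_x].
    by rewrite addr0; apply: eq_bigr => b _; rewrite mul1r.
  rewrite -mulr_sumr ffunE groupV.
  by case: ifP => [Hx|_]; rewrite ?mul0r // sum_chars_nt ?mulr0.
rewrite (bigD1_seq _ (chi_one_in hatHP)) //= (char_orthogonality one_char) // eqxx.
rewrite big1_seq ?addr0 // => b /andP[b_neq1 /hatHP b_char].
by rewrite (char_orthogonality one_char) // eq_sym (negbTE b_neq1).
Qed.

Lemma sum_e_chi : \sum_(b <- hatH) e b = delta k 1.
Proof.
apply/ffunP=> y; rewrite sum_ffunE ffunE.
have [Hy|notHy] := boolP (y \in H); last first.
  rewrite big1_seq => [|b _]; last by rewrite e_chi_out.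
  by case: eqP notHy => // ->; rewrite group1.
under eq_bigr => b _ do rewrite ffunE Hy.
rewrite -mulr_sumr -eq_invg1; have [->|/eqP nt_y] := eqP.
  by rewrite sum_chars1 mulVf ?natr_cardG_neq0.
by rewrite sum_chars_nt ?groupV ?mulr0.
Qed.

(* Substituting [b -> b c^-1] factors the double sum as [ecomb lam x] times
   [|H|^-1 \sum_c c (x y^-1)], and the latter is [x == y]. *)
Lemma ecomb_mul_pointwise (lam : {ffun gT -> k} -> k) :
  {in hatH &, forall a b, lam (chi_mul a b) = lam a * lam b} ->
  forall x y, ecomb lam x * ecomb lam y = if x == y then ecomb lam x else 0.
Proof.
move=> lamM x y; have ecomb_out z : z \notin H -> ecomb lam z = 0.
  by move=> notHz; rewrite ecombE big1_seq // => b _; rewrite e_chi_out ?mulr0.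
have [Hx|notHx] := boolP (x \in H); last by rewrite ecomb_out // mul0r if_same.
have [Hy|notHy] := boolP (y \in H); last first.
  by rewrite (ecomb_out y) // mulr0; case: eqP notHy => // <- /ecomb_out ->.
rewrite !ecombE big_distrlr exchange_big /=.
transitivity (\sum_(c <- hatH)
    (\sum_(b <- hatH) lam b * e b x) * (#|H|%:R^-1 * c (x * y^-1)%g)).
  apply: eq_big_seq => c hc; have c_char := proj1 (hatHP c) hc; rewrite mulr_suml.
  have hcV : chi_inv c \in hatH by apply/hatHP/is_char_inv.
  rewrite (sum_chi_mulr hatHP hatH_uniq _ hcV); apply: eq_big_seq => b /hatHP b_char.
  have hbcV : chi_mul b (chi_inv c) \in hatH by apply/hatHP/is_char_mul/is_char_inv.
  rewrite -{3}(chi_mulVK b_char c_char) (lamM _ _ hbcV hc) !ffunE Hx Hy invgK.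
  by case: c_char => _ _ cM; rewrite cM ?groupV //; ring.
rewrite -mulr_sumr -mulr_sumr; have [<-|/eqP x_neq_y] := eqP.
  by rewrite mulgV sum_chars1 mulVf ?natr_cardG_neq0 ?mulr1.
by rewrite sum_chars_nt ?mulr0 ?groupM ?groupV // -eq_mulgV1.
Qed.

End AbelianDuality.

Section Cocycle.
Variables (k : fieldType) (gT : finGroupType) (H : {group gT}).
Variables (hatH : seq {ffun gT -> k}) (omega : {ffun gT -> k} -> {ffun gT -> k} -> k).
Hypothesis hatHP : forall chi, chi \in hatH <-> is_char H chi.
Hypothesis omega_cocycle : two_cocycle hatH omega.

(* The alternating bicharacter of [omega]; [chi] is [omega]-regular exactly
   when [alt_bichar chi] is trivial. *)
Definition alt_bichar a b := omega a b / omega b a.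

Lemma cocycle_one_comm a : a \in hatH ->
  omega (chi_one k H) a = omega a (chi_one k H).
Proof.
move=> ha; have a_char := proj1 (hatHP a) ha; have h1 := chi_one_in hatHP.
have one_char := is_char_one k H; have [omega_neq0 omegaM] := omega_cocycle.
have E1 := omegaM _ _ _ h1 h1 ha; rewrite !chi_mul1 // in E1.
have E2 := omegaM _ _ _ ha h1 h1; rewrite chi_mulC !chi_mul1 // in E2.
have -> : omega (chi_one k H) a = omega (chi_one k H) (chi_one k H).
  by apply: (mulIf (omega_neq0 _ _ h1 ha)); rewrite E1.
by apply: (mulfI (omega_neq0 _ _ ha h1)); rewrite E2 mulrC.
Qed.

Lemma alt_bicharM x : x \in hatH ->
  {in hatH &, forall y z, alt_bichar x (chi_mul y z) = alt_bichar x y * alt_bichar x z}.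
Proof.
move=> hx y z hy hz; have [omega_neq0 omegaM] := omega_cocycle.
have hyz : chi_mul y z \in hatH by apply/hatHP/is_char_mul; apply/hatHP.
have c1 := omegaM _ _ _ hx hy hz.
have c2 := omegaM _ _ _ hy hz hx.
have c3 := omegaM _ _ _ hy hx hz.
rewrite (chi_mulC y x) (chi_mulC z x) in c2 c3.
rewrite /alt_bichar mulf_div; apply/eqP; rewrite eqr_div ?mulf_neq0 ?omega_neq0 //.
apply/eqP; apply: (mulIf (omega_neq0 _ _ hy hz)).
transitivity (omega x y * omega z x * (omega y x * omega (chi_mul x y) z)).
  transitivity (omega y z * omega x (chi_mul y z) * (omega y x * omega z x)).
    by ring.
  by rewrite -c1; ring.
rewrite c3; transitivity (omega x y * omega x z * (omega y z * omega (chi_mul y z) x)).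
  by rewrite c2; ring.
by ring.
Qed.

End Cocycle.

Section TwistedDual.
Variables (k : closedFieldType) (gT : finGroupType) (H : {group gT}).
Variables (hatH : seq {ffun gT -> k}) (omega : {ffun gT -> k} -> {ffun gT -> k} -> k).
Variables (Jinv : KG2 k gT) (eta : gT -> k).
Hypothesis ch0 : [pchar k] =i pred0.
Hypothesis cHH : abelian H.
Hypothesis hatH_uniq : uniq hatH.
Hypothesis hatHP : forall chi, chi \in hatH <-> is_char H chi.
Hypothesis omega_cocycle : two_cocycle hatH omega.
Hypothesis JinvJ : mul2 Jinv (twistJ H hatH omega) = one2 k gT.
Hypothesis JJinv : mul2 (twistJ H hatH omega) Jinv = one2 k gT.
Hypothesis lin_eta : is_lin_char eta.

Local Notation J := (twistJ H hatH omega).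
Local Notation etaH := (restr H eta).
Local Notation e := (e_chi H).
Local Notation ecomb := (ecomb H hatH).
Local Notation u := (contr1 eta J).
Local Notation u' := (contr1 eta Jinv).
Local Notation v := (contr2 eta J).
Local Notation v' := (contr2 eta Jinv).

Lemma restr_in : etaH \in hatH.
Proof. exact/hatHP/is_char_restr. Qed.

Lemma contr1_twistJ : u = ecomb (omega etaH).
Proof.
apply/ffunP=> y; rewrite ecombE ffunE.
transitivity (\sum_(a <- hatH) \sum_(b <- hatH)
    omega a b * e b y * \sum_x e a x * eta x).
  under eq_bigr => x _ do rewrite ffunE mulr_suml.
  under eq_bigr => x _ do under eq_bigr => a _ do rewrite mulr_suml.
  rewrite exchange_big /=; apply: eq_bigr => a _; rewrite exchange_big /=.
  apply: eq_bigr => b _; rewrite mulr_sumr /=; apply: eq_bigr => x _.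
  by rewrite ffunE /=; ring.
under eq_big_seq => a /hatHP a_char do rewrite e_chi_lin_char //.
rewrite (bigD1_seq _ restr_in) //= eqxx [X in _ + X]big1_seq ?addr0.
  by apply: eq_bigr => b _; rewrite mulr1.
move=> a /andP[a_neq _]; rewrite big1 // => b _.
by rewrite (negbTE a_neq) mulr0.
Qed.

Lemma contr2_twistJ : v = ecomb (fun b => omega b etaH).
Proof.
apply/ffunP=> x; rewrite ecombE ffunE.
transitivity (\sum_(a <- hatH) \sum_(b <- hatH)
    omega a b * e a x * \sum_y e b y * eta y).
  under eq_bigr => y _ do rewrite ffunE mulr_suml.
  under eq_bigr => y _ do under eq_bigr => a _ do rewrite mulr_suml.
  rewrite exchange_big /=; apply: eq_bigr => a _; rewrite exchange_big /=.
  apply: eq_bigr => b _; rewrite mulr_sumr /=; apply: eq_bigr => y _.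
  by rewrite ffunE /=; ring.
apply: eq_bigr => a _.
under eq_big_seq => b /hatHP b_char do rewrite e_chi_lin_char //.
rewrite (bigD1_seq _ restr_in) //= eqxx big1_seq ?addr0 ?mulr1 // => b /andP[b_neq _].
by rewrite (negbTE b_neq) mulr0.
Qed.

Lemma contr1_twistJ_inv : conv u' u = delta k 1 /\ conv u u' = delta k 1.
Proof. by rewrite -!contr1_mul // JinvJ JJinv contr1_one. Qed.

Lemma contr2_twistJ_inv : conv v' v = delta k 1 /\ conv v v' = delta k 1.
Proof. by rewrite -!contr2_mul // JinvJ JJinv contr2_one. Qed.

Lemma central_of_regular : omega_regular hatH omega etaH -> central_dual J Jinv eta.
Proof.
move=> etaH_reg; apply/central_dualP => g.
rewrite (contr1_DeltaJ lin_eta) (contr2_DeltaJ lin_eta).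
have u_v : u = v.
  rewrite contr1_twistJ contr2_twistJ; apply/ffunP=> y; rewrite !ecombE.
  by apply: eq_big_seq => b hb; rewrite etaH_reg.
have [u'u _] := contr1_twistJ_inv; have [_ vv'] := contr2_twistJ_inv.
have u'_v' : u' = v' by rewrite -[LHS]conv1r -vv' -u_v -convA u'u conv1l.
by rewrite u_v u'_v'.
Qed.

Lemma central_commute : central_dual J Jinv eta ->
  forall g, conv (delta k g) (conv u v') = conv (conv u v') (delta k g).
Proof.
move/central_dualP=> central; have [_ uu'] := contr1_twistJ_inv.
have [_ vv'] := contr2_twistJ_inv; apply: conv_conj_commute uu' vv' _ => g.
have := central g; rewrite (contr1_DeltaJ lin_eta) (contr2_DeltaJ lin_eta).
rewrite !conv_scalel !conv_scaler => /ffunP E; apply/ffunP=> y.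
have := E y; rewrite !ffunE.
by apply: mulfI; apply: lin_char_neq0.
Qed.

Lemma conv_twist_e b : b \in hatH ->
  conv (conv u v') (e b) = [ffun y => alt_bichar omega etaH b * e b y].
Proof.
move=> hb; have omega_neq0 : omega b etaH != 0.
  by case: omega_cocycle => ->; rewrite ?restr_in.
have [v'v _] := contr2_twistJ_inv.
have v_e : conv v (e b) = [ffun y => omega b etaH * e b y].
  by rewrite contr2_twistJ conv_ecomb_e.
have v'_e : conv v' (e b) = [ffun y => (omega b etaH)^-1 * e b y].
  rewrite -[e b in RHS]conv1l -v'v convA v_e conv_scaler.
  by apply/ffunP=> y; rewrite 2![in RHS]ffunE mulKf.
rewrite convA v'_e conv_scaler contr1_twistJ conv_ecomb_e //.
by apply/ffunP=> y; rewrite !ffunE /alt_bichar mulrA (mulrC (omega b etaH)^-1).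
Qed.

Lemma regular_of_central : ('Z([set: gT]) = 1)%g ->
  central_dual J Jinv eta -> omega_regular hatH omega etaH.
Proof.
move=> ZG central; set w := conv u v'.
have wE : w = ecomb (alt_bichar omega etaH).
  rewrite -[w]conv1r -(sum_e_chi ch0 cHH hatHP hatH_uniq) conv_sumr.
  by apply: eq_big_seq => b hb; rewrite conv_twist_e.
have w_neq0 : w != 0.
  have [_ uu'] := contr1_twistJ_inv; have [v'v _] := contr2_twistJ_inv.
  apply: contraTneq (delta_neq0 k (1%g : gT)) => w0.
  by rewrite -uu' -[u]conv1r -v'v -!convA -/w w0 !conv0l eqxx.
have w_idem := ecomb_mul_pointwise ch0 cHH hatHP hatH_uniq
  (alt_bicharM hatHP omega_cocycle restr_in).
rewrite -wE in w_idem; have [h w_h] := orthogonal_idem_delta w_idem w_neq0.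
have h1 : h = 1%g.
  suff: (h \in 'Z([set: gT]))%g by rewrite ZG => /set1gP.
  apply/centerP; split=> [|g _]; first by rewrite inE.
  have := central_commute central g; rewrite -/w w_h !conv_delta.
  by move/delta_inj.
move=> psi hpsi; have psi_char := proj1 (hatHP psi) hpsi.
have := conv_twist_e hpsi; rewrite -/w w_h h1 conv1l => /ffunP/(_ 1%g).
rewrite [in X in _ = X -> _]ffunE e_chi1 // -[X in X = _ -> _]mul1r.
by move/(mulIf (invr_neq0 (natr_cardG_neq0 H ch0)))/esym/divr1_eq.
Qed.

End TwistedDual.

Unset Implicit Arguments.

Theorem theorem3p1 (k : closedFieldType) (gT : finGroupType)
    (H : {group gT}) (hatH : seq {ffun gT -> k})
    (omega : {ffun gT -> k} -> {ffun gT -> k} -> k)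
    (Jinv : KG2 k gT) (eta : gT -> k) :
  [pchar k] =i pred0 ->
  ('Z([set: gT]) = 1)%g ->
  fingroup.abelian H ->
  uniq hatH ->
  (forall chi, chi \in hatH <-> is_char H chi) ->
  two_cocycle hatH omega ->
  mul2 Jinv (twistJ H hatH omega) = one2 k gT ->
  mul2 (twistJ H hatH omega) Jinv = one2 k gT ->
  is_lin_char eta ->
  (central_dual (twistJ H hatH omega) Jinv eta <->
     omega_regular hatH omega (restr H eta)) /\
  (omega_nondegenerate H hatH omega ->
     (central_dual (twistJ H hatH omega) Jinv eta <->
        {in H, forall g, eta g = 1})).
Proof.
move=> ch0 ZG cHH hatH_uniq hatHP omega_cocycle JinvJ JJinv lin_eta.
have central_iff : central_dual (twistJ H hatH omega) Jinv eta <->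
    omega_regular hatH omega (restr H eta).
  split; first exact: regular_of_central ch0 cHH hatH_uniq hatHP omega_cocycle
    JinvJ JJinv lin_eta ZG.
  exact: central_of_regular hatHP JinvJ JJinv lin_eta.
split=> // nondeg; rewrite central_iff; split=> [etaH_reg g Hg | eta_H1].
  have := nondeg _ (restr_in hatHP lin_eta) etaH_reg.
  by move=> /ffunP/(_ g); rewrite !ffunE Hg.
have -> : restr H eta = chi_one k H.
  by apply/ffunP=> g; rewrite !ffunE; case: ifP => // /eta_H1.
by move=> psi hpsi; rewrite (cocycle_one_comm hatHP omega_cocycle hpsi).
Qed.
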